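(* Let $\mathcal A$ be a group and $\mathcal H$ any subgroup. Then there exists a generating system $X$ of $\mathcal A$ of size $d(\mathcal A)$ such that the Schreier graph $\mathrm{Sch}(\mathcal A,\mathcal H,X)$ is vertex-transitive.
   Context: $d(\mathcal A)$ is the number of elements of order $2$ of $\mathcal A$ plus half the number of elements of order at least $3$. A generating system is a multiset of elements generating $\mathcal A$. The Schreier graph $\mathrm{Sch}(\mathcal A,\mathcal H,X)$ has vertices the right cosets $\mathcal Hg$ and, for each coset and each $x$ with $x\in X$ or $x^{-1}\in X$, an edge labeled $x$ from $\mathcal Hg$ to $\mathcal Hgx$ whose inverse is the edge labeled $x^{-1}$ from $\mathcal Hgx$ (loops and multiple edges allowed). Vertex-transitive means transitive on vertices under graph automorphisms (not necessarily label-preserving). *)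

From mathcomp Require Import all_boot all_fingroup.
Set Implicit Arguments. Unset Strict Implicit. Unset Printing Implicit Defensive.
Local Open Scope group_scope.

Definition dA (gT : finGroupType) (A : {set gT}) : nat :=
  (#|[set x in A | #[x] == 2]| + #|[set x in A | 2 < #[x]]| %/ 2)%N.

Section Schreier.
Variables (gT : finGroupType) (H A : {set gT}) (X : seq gT).

(* Darts of Sch(A,H,X): (right coset Hg, index i of the generator in the
   multiset X, orientation b).  b = false: edge labeled x_i from Hg to Hg x_i;
   b = true: edge labeled x_i^-1 from Hg to Hg x_i^-1 (only present when
   x_i^-1 <> x_i, otherwise it coincides with the b = false dart). *)
Definition sch_dart_t := ({set gT} * 'I_(size X) * bool)%type.

Definition sch_gen (i : 'I_(size X)) : gT := nth 1 X i.

Definition sch_label (d : sch_dart_t) : gT :=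
  if d.2 then (sch_gen d.1.2)^-1 else sch_gen d.1.2.

Definition sch_vertices : {set {set gT}} := rcosets H A.

Definition sch_darts : {set sch_dart_t} :=
  [set d : sch_dart_t | (d.1.1 \in rcosets H A)
                        && (d.2 ==> ((sch_gen d.1.2)^-1 != sch_gen d.1.2))].

Definition sch_origin (d : sch_dart_t) : {set gT} := d.1.1.

Definition sch_inv (d : sch_dart_t) : sch_dart_t :=
  (d.1.1 :* sch_label d, d.1.2,
   if (sch_gen d.1.2)^-1 == sch_gen d.1.2 then false else ~~ d.2).

(* graph automorphism (not necessarily label-preserving): bijections on
   vertices and on darts commuting with origin and edge inversion *)
Definition sch_aut (fV : {perm {set gT}}) (fD : {perm sch_dart_t}) : Prop :=
  [/\ fV @: sch_vertices = sch_vertices,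
      fD @: sch_darts = sch_darts,
      {in sch_darts, forall d, fV (sch_origin d) = sch_origin (fD d)} &
      {in sch_darts, forall d, fD (sch_inv d) = sch_inv (fD d)}].

Definition sch_vertex_transitive : Prop :=
  forall u v, u \in sch_vertices -> v \in sch_vertices ->
    exists fV : {perm {set gT}}, exists fD : {perm sch_dart_t},
      sch_aut fV fD /\ fV u = v.

End Schreier.

From mathcomp Require Import all_boot all_fingroup cyclic.
Set Implicit Arguments. Unset Strict Implicit. Unset Printing Implicit Defensive.
Local Open Scope group_scope.

(** Take for X one element out of each pair {x, x^-1} of non-identity elements
   of A, so that |X| = d(A), X generates A, and X ∪ X^-1 = A \ {1} is closed
   under conjugation.  Right multiplication by a ∈ A sends the edge Hg -> Hgx
   labeled x to the edge Hga -> Hga(x^a) labeled x^a, hence is an automorphism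
   of Sch(A, H, X), and these automorphisms act transitively on the cosets. *)

Section OrderTwo.
Variable gT : finGroupType.
Implicit Type x : gT.

Lemma invg_eq_order_le2 x : (x^-1 == x) = (#[x] <= 2)%N.
Proof.
rewrite eq_invg_mul -expg2 -order_dvdn.
by have := order_gt0 x; case: #[x] => [|[|[|n]]].
Qed.

Lemma order_eq2 x : (#[x] == 2) = (x != 1) && (x^-1 == x).
Proof.
by rewrite invg_eq_order_le2 -order_eq1; have := order_gt0 x; case: #[x] => [|[|[|]]].
Qed.

Lemma order_gt2 x : (2 < #[x])%N = (x^-1 != x).
Proof. by rewrite invg_eq_order_le2 ltnNge. Qed.

End OrderTwo.

Lemma card_involution_half (T : finType) (f : T -> T) (D : {set T}) :
    involutive f -> {in D, forall x, f x \in D /\ f x != x} ->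
  #|D| = (2 * #|[set x in D | enum_rank x < enum_rank (f x)]|)%N.
Proof.
move=> fK fD; set D1 := [set x in D | _].
have D1_sub : D1 \subset D by apply/subsetP => x; rewrite inE => /andP[].
have rank_neq x : x \in D -> (enum_rank x : nat) != enum_rank (f x).
  by case/fD=> _ fxx; apply: contra fxx => /eqP/val_inj/enum_rank_inj <-.
have D1c : D :\: D1 = f @^-1: D1.
  apply/setP => x; rewrite !inE fK; have [xD | xD] := boolP (x \in D).
    by rewrite andbT (fD x xD).1 -leqNgt leq_eqVlt eq_sym (negbTE (rank_neq x xD)).
  by apply/esym/negbTE; apply: contra xD => /andP[/fD[]]; rewrite fK.
rewrite -(cardsID D1 D) (setIidPr D1_sub) D1c card_preimset ?addnn ?mul2n //.
exact: inv_inj.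
Qed.

Lemma imset_perm_stable (T : finType) (s : {perm T}) (D : {set T}) :
  {in D, forall x, s x \in D} -> s @: D = D.
Proof.
move=> sD; apply/eqP; rewrite eqEcard card_imset ?leqnn ?andbT; last exact: perm_inj.
by apply/subsetP => _ /imsetP[x xD ->]; apply: sD.
Qed.

Section HalfNontrivial.
Variables (gT : finGroupType) (A : {group gT}).

(* The enumeration rank serves as an arbitrary total order used to pick one
   element of each pair {x, x^-1}. *)
Definition half_nontriv : {set gT} :=
  [set x in A | (x != 1) && (enum_rank x <= enum_rank x^-1)%N].

Lemma half_nontriv_sub : half_nontriv \subset A^#.
Proof. by apply/subsetP => x; rewrite !inE => /and3P[-> -> _]. Qed.

Lemma half_nontrivP z : z \in A^# -> (z \in half_nontriv) || (z^-1 \in half_nontriv).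
Proof.
rewrite !inE groupV invg_eq1 invgK => /andP[-> ->] /=; exact: leq_total.
Qed.

Lemma half_nontriv_inv y : y \in half_nontriv -> y^-1 \in half_nontriv -> y^-1 = y.
Proof.
rewrite !inE invgK => /and3P[_ _ le1] /and3P[_ _ le2].
by apply: enum_rank_inj; apply: val_inj; apply/eqP; rewrite eqn_leq le1 le2.
Qed.

Lemma gen_half_nontriv : <<half_nontriv>> = A.
Proof.
apply/eqP; rewrite eqEsubset gen_subG (subset_trans half_nontriv_sub) ?subD1set //=.
apply/subsetP => z zA; have [->|nz] := eqVneq z 1; first exact: group1.
have /orP[zS|zVS] : (z \in half_nontriv) || (z^-1 \in half_nontriv).
  by apply: half_nontrivP; rewrite !inE nz.
- exact: mem_gen.
- by rewrite -[z]invgK groupV mem_gen.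
Qed.

Lemma card_half_nontriv : #|half_nontriv| = dA A.
Proof.
set I := [set x in A | #[x] == 2]; set T := [set x in A | 2 < #[x]].
pose T1 := [set x in T | enum_rank x < enum_rank x^-1].
have T_half : #|T| = (2 * #|T1|)%N.
  apply: card_involution_half; first exact: invgK.
  by move=> x; rewrite !inE groupV orderV order_gt2 eq_sym => /andP[-> ->].
have -> : half_nontriv = I :|: T1.
  apply/setP => x; rewrite !inE order_eq2 order_gt2; case: (x \in A) => //=.
  have [-> | xVx] := eqVneq x^-1 x; first by rewrite leqnn andbT orbF.
  have -> : (x == 1) = false by apply: contra_neqF xVx => /eqP ->; rewrite invg1.
  rewrite leq_eqVlt; case: eqP => [/val_inj/enum_rank_inj xVx' | //].
  by rewrite -xVx' eqxx in xVx.
rewrite cardsU /dA T_half mulKn // -/I.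
suff -> : I :&: T1 = set0 by rewrite cards0 subn0.
apply/setP => x; rewrite !inE; apply/negbTE.
by apply/negP => /andP[/andP[_ /eqP ->] /andP[/andP[]]].
Qed.

End HalfNontrivial.

Section ConjugateArcs.
Variables (gT : finGroupType) (X : seq gT) (a : gT).
Hypothesis X_uniq : uniq X.
Hypothesis X_inv : forall y, y \in X -> y^-1 \in X -> y^-1 = y.
Hypothesis X_conj : forall y, y \in X -> (y ^ a \in X) || ((y ^ a)^-1 \in X).

Local Notation gen := (@sch_gen gT X).
Local Notation arc := ('I_(size X) * bool)%type.

Definition arc_label (p : arc) : gT := if p.2 then (gen p.1)^-1 else gen p.1.

(* Arcs are determined by their label, except the arcs (i, true) with [gen i]
   an involution: these are not darts of the graph, and the flag tells them
   apart. *)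
Definition arc_key (p : arc) : gT * bool :=
  (arc_label p, p.2 && ((gen p.1)^-1 == gen p.1)).

Definition arc_rev (p : arc) : arc :=
  (p.1, if (gen p.1)^-1 == gen p.1 then false else ~~ p.2).

(* The arc labeled [arc_label p ^ a]; non-darts are sent to non-darts so that
   [conj_arc] is a bijection of all arcs. *)
Definition conj_arc (p : arc) : arc :=
  let y := arc_label p ^ a in
  if y \in X then (insubd p.1 (index y X), p.2 && (y^-1 == y))
  else (insubd p.1 (index y^-1 X), true).

Lemma sch_gen_mem i : gen i \in X.
Proof. exact: mem_nth. Qed.

Lemma sch_gen_index i y : y \in X -> gen (insubd i (index y X)) = y.
Proof. by move=> yX; rewrite /sch_gen val_insubd index_mem yX nth_index. Qed.

Lemma sch_gen_inj : injective gen.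
Proof.
move=> i j eq_ij; apply/val_inj/eqP.
by rewrite -(nth_uniq 1 (ltn_ord i) (ltn_ord j) X_uniq); apply/eqP.
Qed.

Lemma arc_label_invol p : ((arc_label p)^-1 == arc_label p) = ((gen p.1)^-1 == gen p.1).
Proof. by rewrite /arc_label; case: p.2; rewrite // invgK eq_sym. Qed.

Lemma arc_key_inj : injective arc_key.
Proof.
move=> [i b] [j c] [eq_lab eq_inv] /=.
have eq_status : ((gen i)^-1 == gen i) = ((gen j)^-1 == gen j).
  by have := arc_label_invol (i, b); rewrite eq_lab arc_label_invol.
rewrite /= -eq_status in eq_inv; move: eq_lab; rewrite /arc_label /=.
have [/eqP ii | ni] := boolP ((gen i)^-1 == gen i).
  move: eq_status eq_inv; rewrite ii eqxx !andbT => /esym/eqP jj <-.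
  by rewrite jj; case: b => /sch_gen_inj ->.
have inv_gen k l : gen k = (gen l)^-1 -> (gen k)^-1 == gen k.
  by move=> e; apply/eqP/X_inv; rewrite ?sch_gen_mem // e invgK sch_gen_mem.
have nj : (gen j)^-1 != gen j by rewrite -eq_status.
case: b c eq_inv => [] [] _ /=.
- by move/invg_inj/sch_gen_inj ->.
- by move/esym/inv_gen; rewrite (negbTE nj).
- by move/inv_gen; rewrite (negbTE ni).
- by move/sch_gen_inj ->.
Qed.

Lemma arc_label_conj_mem p : (arc_label p ^ a \in X) || ((arc_label p ^ a)^-1 \in X).
Proof.
rewrite /arc_label; case: p.2; last exact/X_conj/sch_gen_mem.
by rewrite conjVg invgK orbC; apply/X_conj/sch_gen_mem.
Qed.

Lemma arc_key_conj p : arc_key (conj_arc p) = (arc_label p ^ a, (arc_key p).2).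
Proof.
rewrite /arc_key /conj_arc; set y := arc_label p ^ a.
have status_y : (y^-1 == y) = ((gen p.1)^-1 == gen p.1).
  by rewrite -arc_label_invol -conjVg (inj_eq (conjg_inj a)).
have [yX | yNX] := boolP (y \in X).
  rewrite /arc_label /= sch_gen_index // -status_y -andbA andbb; congr (_, _).
  by case: ifP => // /andP[_ /eqP].
have yVX : y^-1 \in X by have := arc_label_conj_mem p; rewrite (negbTE yNX).
have ny : (y^-1 == y) = false by apply: contraNF yNX => /eqP <-.
by rewrite /arc_label /= sch_gen_index // invgK eq_sym ny -status_y ny andbF.
Qed.

Lemma conj_arc_inj : injective conj_arc.
Proof.
move=> p q /(congr1 arc_key); rewrite !arc_key_conj => -[/conjg_inj eq_lab eq_inv].
by apply: arc_key_inj; rewrite /arc_key eq_lab; congr (_, _).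
Qed.

Lemma arc_key_rev p : ~~ (arc_key p).2 -> arc_key (arc_rev p) = ((arc_label p)^-1, false).
Proof.
rewrite /arc_key /arc_rev /arc_label /=; case: p => i b /=.
have [/eqP ii | ni] := boolP ((gen i)^-1 == gen i).
  by rewrite andbT => /negbTE ->; rewrite ii.
by case: b; rewrite ?invgK andbF.
Qed.

End ConjugateArcs.

Section RcosetAutomorphism.
Variables (gT : finGroupType) (H A : {group gT}) (X : seq gT) (a : gT).
Hypothesis X_uniq : uniq X.
Hypothesis X_inv : forall y, y \in X -> y^-1 \in X -> y^-1 = y.
Hypothesis X_conj : forall y, y \in X -> (y ^ a \in X) || ((y ^ a)^-1 \in X).
Hypothesis aA : a \in A.

Definition dart_conj (d : sch_dart_t X) : sch_dart_t X :=
  let p := conj_arc a (d.1.2, d.2) in (d.1.1 :* a, p.1, p.2).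

Lemma dart_conj_inj : injective dart_conj.
Proof.
move=> [[C i] b] [[C' i'] b'] [/rcoset_inj -> eq1 eq2].
have /(conj_arc_inj X_uniq X_inv X_conj)[-> ->] : conj_arc a (i, b) = conj_arc a (i', b').
  by rewrite [LHS]surjective_pairing [RHS]surjective_pairing eq1 eq2.
by [].
Qed.

Lemma mem_sch_darts d :
  (d \in sch_darts H A X) = (d.1.1 \in rcosets H A) && ~~ (arc_key (d.1.2, d.2)).2.
Proof. by rewrite inE /arc_key /= negb_and implybE. Qed.

Lemma rcosets_mulr C : C \in rcosets H A -> C :* a \in rcosets H A.
Proof.
by case/rcosetsP => x xA ->; apply/rcosetsP; exists (x * a); rewrite ?groupM ?rcosetM.
Qed.

Lemma sch_aut_rcoset :
  sch_aut H A (perm (@rcoset_inj gT a)) (perm dart_conj_inj).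
Proof.
split.
- by apply: imset_perm_stable => C; rewrite permE; apply: rcosets_mulr.
- apply: imset_perm_stable => d; rewrite permE !mem_sch_darts.
  have -> : ((dart_conj d).1.2, (dart_conj d).2) = conj_arc a (d.1.2, d.2).
    by rewrite /= -surjective_pairing.
  rewrite [(dart_conj d).1.1]/= (arc_key_conj X_conj).
  by case/andP => /rcosets_mulr -> ->.
- by move=> d _; rewrite !permE.
move=> [[C i] b]; rewrite mem_sch_darts => /andP[_ valid]; set p := (i, b) in valid.
have lab_conj : arc_label (conj_arc a p) = arc_label p ^ a.
  by have := congr1 fst (arc_key_conj X_conj p).
have rev_conj : conj_arc a (arc_rev p) = arc_rev (conj_arc a p).
  apply: (arc_key_inj X_uniq X_inv).
  have valid' : ~~ (arc_key (conj_arc a p)).2 by rewrite (arc_key_conj X_conj).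
  have lab_rev : arc_label (arc_rev p) = (arc_label p)^-1.
    by have := congr1 fst (arc_key_rev valid).
  rewrite (arc_key_conj X_conj) (arc_key_rev valid) (arc_key_rev valid').
  by rewrite lab_rev lab_conj conjVg.
rewrite !permE.
change (((C :* arc_label p) :* a, (conj_arc a (arc_rev p)).1, (conj_arc a (arc_rev p)).2)
  = ((C :* a) :* arc_label (conj_arc a p), (arc_rev (conj_arc a p)).1,
     (arc_rev (conj_arc a p)).2)).
by rewrite rev_conj lab_conj -!rcosetM conjgC.
Qed.

End RcosetAutomorphism.

Lemma sch_vertex_transitive_conj_closed (gT : finGroupType) (H A : {group gT})
    (X : seq gT) :
    uniq X -> (forall y, y \in X -> y^-1 \in X -> y^-1 = y) ->
    (forall a y, a \in A -> y \in X -> (y ^ a \in X) || ((y ^ a)^-1 \in X)) ->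
  sch_vertex_transitive H A X.
Proof.
move=> X_uniq X_inv X_conj _ _ /rcosetsP[x xA ->] /rcosetsP[y yA ->].
have aA : x^-1 * y \in A by rewrite groupM ?groupV.
have X_conj_a := X_conj _ _ aA.
exists (perm (@rcoset_inj gT (x^-1 * y))), (perm (dart_conj_inj X_uniq X_inv X_conj_a)).
split; first exact: sch_aut_rcoset.
by rewrite permE -rcosetM mulKVg.
Qed.

Theorem proposition6p1 (gT : finGroupType) (A H : {group gT}) :
  H \subset A ->
  exists X : seq gT,
    [/\ size X = dA A,
        <<[set x in X]>> = A &
        sch_vertex_transitive H A X].
Proof.
move=> _; set S := half_nontriv A.
have setS : [set x in enum S] = S by apply/setP => x; rewrite inE mem_enum.
exists (enum S); split.
- by rewrite -cardE card_half_nontriv.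
- by rewrite setS gen_half_nontriv.
apply: sch_vertex_transitive_conj_closed => [|y|a y aA]; rewrite ?enum_uniq ?mem_enum //.
  exact: half_nontriv_inv.
move=> /(subsetP (half_nontriv_sub A)) yA; apply: half_nontrivP.
by case/setD1P: yA => y1 yA; rewrite !inE conjg_eq1 y1 groupJ.
Qed.
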